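(* Let $\mathcal{C}$ be a strongly connected category with all small products and let $\mathcal{D}$ be an essentially small category. Then any functor $\mathcal{C}\to\mathcal{D}$ is isomorphic to a constant functor.
   Context: A category is strongly connected if for any two objects $c,c'$ the hom-set $\mathcal{C}(c,c')$ is non-empty. A category is essentially small if it is equivalent to a small category. *)

Set Universe Polymorphism.
Set Implicit Arguments.

Record Category@{o h} : Type := MkCategory {
  Obj : Type@{o};
  Hom : Obj -> Obj -> Type@{h};
  cid : forall a, Hom a a;
  comp : forall a b c, Hom b c -> Hom a b -> Hom a c;
  comp_id_l : forall a b (f : Hom a b), comp (cid b) f = f;
  comp_id_r : forall a b (f : Hom a b), comp f (cid a) = f;
  comp_assoc : forall a b c d (f : Hom c d) (g : Hom b c) (h : Hom a b),
      comp f (comp g h) = comp (comp f g) h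
}.

Arguments cid {_} _.
Arguments comp {_ _ _ _} _ _.

Record Functor (C D : Category) : Type := {
  fobj : Obj C -> Obj D;
  fmap : forall a b, Hom C a b -> Hom D (fobj a) (fobj b);
  fmap_id : forall a, fmap a a (cid a) = cid (fobj a);
  fmap_comp : forall a b c (f : Hom C b c) (g : Hom C a b),
      fmap a c (comp f g) = comp (fmap b c f) (fmap a b g)
}.

Arguments fobj {_ _} _ _.
Arguments fmap {_ _} _ {_ _} _.

Definition is_iso {C : Category} {a b : Obj C} (f : Hom C a b) : Prop :=
  exists g : Hom C b a, comp g f = cid a /\ comp f g = cid b.

Record NatTrans (C D : Category) (F G : Functor C D) : Type := {
  component : forall x : Obj C, Hom D (fobj F x) (fobj G x);
  naturality : forall x y (f : Hom C x y),
      comp (component y) (fmap F f) = comp (fmap G f) (component x)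
}.

Definition functor_isomorphic (C D : Category) (F G : Functor C D) : Prop :=
  exists eta : NatTrans F G, forall x, is_iso (component eta x).

Definition id_functor (C : Category) : Functor C C.
Proof.
  refine {| fobj := fun x => x; fmap := fun a b f => f |}; reflexivity.
Defined.

Definition comp_functor (C D E : Category) (G : Functor D E) (F : Functor C D)
  : Functor C E.
Proof.
  refine {| fobj := fun x => fobj G (fobj F x);
            fmap := fun a b f => fmap G (fmap F f) |}.
  - intro a. rewrite fmap_id. apply fmap_id.
  - intros a b c f g. rewrite fmap_comp. apply fmap_comp.
Defined.

Definition const_functor (C D : Category) (d : Obj D) : Functor C D.
Proof.
  refine {| fobj := fun _ => d; fmap := fun _ _ _ => cid d |}.
  - reflexivity.
  - intros. symmetry. apply comp_id_l.
Defined.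

Definition strongly_connected (C : Category) : Prop :=
  forall c c' : Obj C, inhabited (Hom C c c').

(** C has all small products, "small" meaning indexed by a type in the
    universe [s]. *)
Definition has_small_products@{o h s} (C : Category@{o h}) : Prop :=
  forall (I : Type@{s}) (X : I -> Obj C),
    exists (P : Obj C) (pr : forall i, Hom C P (X i)),
      forall (Y : Obj C) (f : forall i, Hom C Y (X i)),
        exists u : Hom C Y P,
          (forall i, comp (pr i) u = f i) /\
          (forall u' : Hom C Y P, (forall i, comp (pr i) u' = f i) -> u' = u).

Definition equivalent (C D : Category) : Prop :=
  exists (F : Functor C D) (G : Functor D C),
    functor_isomorphic (comp_functor G F) (id_functor C) /\
    functor_isomorphic (comp_functor F G) (id_functor D).

(** Essentially small: equivalent to a category whose objects and hom-sets
    are small (live in the universe [s]). *)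
Definition essentially_small@{o h s} (D : Category@{o h}) : Prop :=
  exists E : Category@{s s}, equivalent D E.

(** A functor [F] into an essentially small category
    identifies all parallel arrows. Otherwise pick [f, g : x -> y] with
    [F f <> F g], let [I] be the type of all arrows of a small category [E]
    equivalent to [D], and let [P] be the [I]-fold power of [y]. Choosing for
    each [h : I -> bool] the map [x -> P] with components [f] or [g] according
    to [h] and sending it through [F] and the faithful [D -> E] injects
    [I -> bool] into [I], contradicting Cantor's theorem. Once [F] identifies
    parallel arrows, strong connectedness makes the images of arbitrary arrows
    [x -> c0] a natural isomorphism from [F] to the constant functor at [F c0]. *)
From Stdlib Require Import ClassicalEpsilon FunctionalExtensionality Eqdep.

Set Universe Polymorphism.

Lemma cantor_no_injection {I : Type} (phi : (I -> bool) -> I) :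
  ~ (forall h h', phi h = phi h' -> h = h').
Proof.
  intro phi_inj.
  set (diag := fun i => if excluded_middle_informative
                             (exists h, phi h = i /\ h i = true)
                        then false else true).
  assert (diag_spec : forall i,
             diag i = true <-> ~ (exists h, phi h = i /\ h i = true)).
  { intro i. unfold diag.
    destruct excluded_middle_informative; intuition discriminate. }
  destruct (diag_spec (phi diag)) as [diag_true diag_false].
  destruct (diag (phi diag)) eqn:Ediag.
  - apply (diag_true eq_refl). now exists diag.
  - apply Bool.diff_false_true, diag_false.
    intros [h [Eh Hh]]. rewrite (phi_inj _ _ Eh), Ediag in Hh. discriminate.
Qed.

Definition faithful {C D : Category} (F : Functor C D) : Prop :=
  forall a b (f g : Hom C a b), fmap F f = fmap F g -> f = g.

Lemma faithful_id_functor (C : Category) : faithful (id_functor C).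
Proof. intros a b f g. exact id. Qed.

Lemma faithful_comp_functor_r {C D E : Category} (G : Functor D E) (F : Functor C D) :
  faithful (comp_functor G F) -> faithful F.
Proof.
  intros GF_faithful a b f g Efg. apply GF_faithful. cbn. now rewrite Efg.
Qed.

(* Naturality gives [F' f = eta_b o F f o eta_a^-1]. *)
Lemma faithful_isomorphic {C D : Category} (F F' : Functor C D) :
  functor_isomorphic F F' -> faithful F' -> faithful F.
Proof.
  intros [eta eta_iso] F'_faithful a b f g Efg. apply F'_faithful.
  destruct (eta_iso a) as [inv [_ Hinv]].
  assert (conj_F : forall k : Hom C a b,
             fmap F' k = comp (comp (component eta b) (fmap F k)) inv).
  { intro k. rewrite naturality, <- comp_assoc, Hinv. now rewrite comp_id_r. }
  now rewrite !conj_F, Efg.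
Qed.

Definition identifies_parallel {C D : Category} (F : Functor C D) : Prop :=
  forall x y (f g : Hom C x y), fmap F f = fmap F g.

Lemma identifies_parallel_comp_faithful {C D E : Category}
    (G : Functor D E) (F : Functor C D) :
  faithful G -> identifies_parallel (comp_functor G F) -> identifies_parallel F.
Proof. intros G_faithful GF_ident x y f g. apply G_faithful, GF_ident. Qed.

Lemma identifies_parallel_into_small@{o h s} {C : Category@{o h}}
    {E : Category@{s s}} (F : Functor C E) :
  has_small_products@{o h s} C -> identifies_parallel F.
Proof.
  intros C_prod x y f g.
  apply NNPP. intro Fneq.
  set (I := {a : Obj E & {b : Obj E & Hom E a b}}).
  destruct (C_prod I (fun _ => y)) as [P [pr P_univ]].
  set (select := fun (h : I -> bool) (k : I) => if h k then f else g).
  destruct (@choice _ _ (fun h u => forall k, comp (pr k) u = select h k))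
    as [tuple Htuple].
  { intro h. destruct (P_univ x (select h)) as [u [Hu _]]. now exists u. }
  apply (@cantor_no_injection I
           (fun h => existT _ (fobj F x) (existT _ (fobj F P) (fmap F (tuple h))) : I)).
  intros h h' Eh. apply inj_pair2, inj_pair2 in Eh.
  apply functional_extensionality. intro k.
  assert (Ek : fmap F (select h k) = fmap F (select h' k)).
  { now rewrite <- Htuple, <- Htuple, !fmap_comp, Eh. }
  unfold select in Ek.
  destruct (h k), (h' k); try reflexivity; exfalso; apply Fneq; congruence.
Qed.

Lemma identifies_parallel_isomorphic_const {C D : Category} (F : Functor C D)
    (c0 : Obj C) :
  strongly_connected C -> identifies_parallel F ->
  functor_isomorphic F (const_functor C D (fobj F c0)).
Proof.
  intros C_conn F_ident.
  set (to_c0 := fun x => epsilon (C_conn x c0) (fun _ => True)).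
  unshelve eexists.
  - exists (fun x => fmap F (to_c0 x)).
    intros x y f. cbn. rewrite comp_id_l, <- fmap_comp. apply F_ident.
  - intro x. cbn. destruct (C_conn c0 x) as [from_c0].
    exists (fmap F from_c0).
    split; rewrite <- fmap_comp, <- fmap_id; apply F_ident.
Qed.

Polymorphic Theorem corollary2p5@{o1 h1 o2 h2 s} :
  forall (C : Category@{o1 h1}) (D : Category@{o2 h2}),
    has_small_products@{o1 h1 s} C ->
    strongly_connected C ->
    essentially_small@{o2 h2 s} D ->
    forall F : Functor C D,
      exists d : Obj D, functor_isomorphic F (const_functor C D d).
Proof.
  intros C D C_prod C_conn [E [G [H [HG_id _]]]] F.
  assert (G_faithful : faithful G).
  { apply (faithful_comp_functor_r H G), (faithful_isomorphic _ _ HG_id).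
    apply faithful_id_functor. }
  assert (F_ident : identifies_parallel F).
  { apply (identifies_parallel_comp_faithful G F G_faithful).
    exact (identifies_parallel_into_small (comp_functor G F) C_prod). }
  destruct (C_prod Empty_set (fun e => match e with end)) as [c0 _].
  exists (fobj F c0).
  exact (identifies_parallel_isomorphic_const F c0 C_conn F_ident).
Qed.
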